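(* If a finite soluble group $G=AB$ is the product of its normal subgroups $A$ and $B$, then $\overline{\Gamma}_s(G)=\overline{\Gamma}_s(A)\cup\overline{\Gamma}_s(B)$.
   Context: All groups are finite; $\pi(G)$ is the set of prime divisors of $|G|$. The Sylow graph $\Gamma_s(G)$ is the directed graph with vertex set $\pi(G)$ and an edge $(p,q)$ whenever $q\in\pi(N_G(P)/PC_G(P))$ for some Sylow $p$-subgroup $P$ of $G$. For a directed graph $\Gamma$, $\overline{\Gamma}$ is the undirected graph on the same vertex set in which two vertices are joined by an edge if they are joined (in either direction) by an edge of $\Gamma$. Union of graphs takes the union of vertex sets and of edge sets. *)

From mathcomp Require Import all_boot all_fingroup all_solvable.
Set Implicit Arguments. Unset Strict Implicit. Unset Printing Implicit Defensive.
Local Open Scope group_scope.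

Definition sylow_vertex (gT : finGroupType) (G : {set gT}) (p : nat) : bool :=
  p \in \pi(G).

Definition sylow_edge (gT : finGroupType) (G : {group gT}) (p q : nat) : bool :=
  [&& p \in \pi(G), q \in \pi(G) &
   [exists P : {group gT},
      (P \in 'Syl_p(G)) && (q \in \pi('N_G(P) / (P <*> 'C_G(P))))]].

Definition usylow_edge (gT : finGroupType) (G : {group gT}) (p q : nat) : bool :=
  sylow_edge G p q || sylow_edge G q p.

From mathcomp Require Import all_boot all_fingroup all_solvable.
Set Implicit Arguments. Unset Strict Implicit. Unset Printing Implicit Defensive.
Local Open Scope group_scope.

(* For a soluble group X, the primes p and q are adjacent in the undirected
   Sylow graph exactly when a Hall {p,q}-subgroup of X is not nilpotent.  A
   q-element normalising but not centralising a Sylow p-subgroup P generates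
   with P a non-nilpotent {p,q}-group; conversely a soluble group in which
   N(R) = R C(R) for every Sylow subgroup R is nilpotent, and inside a Hall
   {p,q}-subgroup a failure of this condition yields an edge of X.  When
   G = AB with A and B normal, a Hall {p,q}-subgroup H of G is the product of
   the normal subgroups H :&: A and H :&: B of H, which are Hall in A and B, so
   by Fitting's theorem H is nilpotent iff both factors are.  The vertex sets
   agree since |A||B| = |G||A :&: B|. *)

Section ProductOfNormalSubgroups.

Variable gT : finGroupType.
Implicit Types (pi : nat_pred) (G H A B X : {group gT}).

Lemma pi_mulG A B G : A * B = G -> \pi(G) =i [predU \pi(A) & \pi(B)].
Proof.
move=> defG p; have sAG : A \subset G by rewrite -defG mulG_subl.
have sBG : B \subset G by rewrite -defG mulG_subr.
apply/idP/orP => [piGp | [] /(pi_of_dvd (cardSg _) (cardG_gt0 G))-> //].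
have : p \in \pi((#|A| * #|B|)%N).
  by rewrite mul_cardG defG pi_ofM ?cardG_gt0 // inE piGp.
by rewrite pi_ofM ?cardG_gt0 // => /orP.
Qed.

Lemma mul_normal_nil G A B :
  A <| G -> B <| G -> A * B = G -> nilpotent A -> nilpotent B -> nilpotent G.
Proof.
move=> nsAG nsBG defG nilA nilB; apply: nilpotentS (Fitting_nil G).
by rewrite -{1}defG mul_subG ?Fitting_max.
Qed.

Lemma Hall_setI_mul pi G A B H :
  A <| G -> B <| G -> A * B = G -> pi.-Hall(G) H -> (H :&: A) * (H :&: B) = H.
Proof.
move=> nsAG nsBG defG hallH.
have hallHA := Hall_setI_normal nsAG hallH.
have hallHB := Hall_setI_normal nsBG hallH.
have hallHAB := Hall_setI_normal (normalI nsAG nsBG) hallH.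
apply/eqP; rewrite eqEcard mul_subG ?subsetIl //=.
rewrite -(@leq_pmul2r #|H :&: (A :&: B)|) //.
have cardAB : (#|A| * #|B| = #|G| * #|A :&: B|)%N by rewrite mul_cardG defG.
have : (#|A|`_pi * #|B|`_pi = #|G|`_pi * #|A :&: B|`_pi)%N.
  by rewrite -!partnM ?cardG_gt0 // cardAB.
rewrite -(card_Hall hallHA) -(card_Hall hallHB) -(card_Hall hallH).
rewrite -(card_Hall hallHAB).
by rewrite mul_cardG setIACA setIid => ->.
Qed.

Definition nonnil_subgroup pi (X : {set gT}) :=
  [exists K : {group gT}, [&& K \subset X, pi.-group K & ~~ nilpotent K]].

Lemma nonnil_subgroup_Hall pi X H :
  solvable X -> pi.-Hall(X) H -> nonnil_subgroup pi X = ~~ nilpotent H.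
Proof.
move=> solX hallH; have [sHX piH _] := and3P hallH.
apply/existsP/idP => [[K /and3P[sKX piK]] | nnilH]; last first.
  by exists H; rewrite sHX piH.
have [x _ sKxH] := Hall_Jsub solX hallH sKX piK.
by apply: contra => nilH; rewrite (isog_nil (conj_isog K x)) (nilpotentS sKxH).
Qed.

Lemma nonnil_subgroup_mul pi G A B :
  solvable G -> A <| G -> B <| G -> A * B = G ->
  nonnil_subgroup pi G = nonnil_subgroup pi A || nonnil_subgroup pi B.
Proof.
move=> solG nsAG nsBG defG; have [H hallH] := Hall_exists pi solG.
have solA := solvableS (normal_sub nsAG) solG.
have solB := solvableS (normal_sub nsBG) solG.
rewrite (nonnil_subgroup_Hall solG hallH).
rewrite (nonnil_subgroup_Hall solA (Hall_setI_normal nsAG hallH)).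
rewrite (nonnil_subgroup_Hall solB (Hall_setI_normal nsBG hallH)) -negb_and.
congr (~~ _); apply/idP/andP => [nilH | [nilHA nilHB]].
  by rewrite !(nilpotentS (subsetIl _ _) nilH).
have sHG := pHall_sub hallH.
exact: mul_normal_nil (normalGI sHG nsAG) (normalGI sHG nsBG)
  (Hall_setI_mul nsAG nsBG defG hallH) nilHA nilHB.
Qed.

End ProductOfNormalSubgroups.

(* The directed Sylow graph of X has no edges. *)
Definition Sylow_norm_cent (gT : finGroupType) (X : {set gT}) :=
  forall r (R : {group gT}), r.-Sylow(X) R -> 'N_X(R) \subset R * 'C_X(R).

Section SylowNormCent.

Variable gT : finGroupType.
Implicit Types (r : nat) (X N R H C : {group gT}).

Lemma quotient_Sylow_norm_cent1 r X N R :
  N <| X -> r.-Sylow(X) R -> 'N_X(R) \subset R * 'C_X(R) ->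
  'N_(X / N)(R / N) \subset R / N * 'C_(X / N)(R / N).
Proof.
move=> nsNX sylR sNRC; have [sNX nNX] := andP nsNX.
have nNR : R \subset 'N(N) := subset_trans (pHall_sub sylR) nNX.
set M := (N <*> R)%G; have defM : N <*> R = N * R by rewrite norm_joinEr.
have sMX : M \subset X by rewrite join_subG sNX (pHall_sub sylR).
have nNM : M \subset 'N(N) by rewrite join_subG normG.
have sylRM : r.-Sylow(M) R := pHall_subl (joing_subr _ _) sMX sylR.
have MN_RN : M / N = R / N by rewrite /= defM quotientMidl.
(* Frattini: 'N_X(M) = M * 'N_('N_X(M))(R), and M maps onto R / N. *)
rewrite -MN_RN -quotient_subnormG ?(normalS (joing_subl _ _) sMX nsNX) //.
rewrite -(Frattini_arg (normalSG sMX) sylRM) quotientMl // MN_RN.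
have sNRC' : 'N_('N_X(M))(R) \subset R * 'C_X(R).
  by apply: subset_trans sNRC; rewrite setSI ?subsetIl.
rewrite -{2}(mulGid (R / N)) -mulgA mulgS //.
rewrite (subset_trans (quotientS N sNRC')) //.
by rewrite quotientMl ?mulgS ?quotient_subcent.
Qed.

Lemma quotient_Sylow_norm_cent X N :
  N <| X -> Sylow_norm_cent X -> Sylow_norm_cent (X / N).
Proof.
move=> nsNX sncX r Rb sylRb; have nNX := normal_norm nsNX.
have [R sylR] := Sylow_exists r X.
have sylRN : r.-Sylow(X / N) (R / N).
  exact: quotient_pHall (subset_trans (pHall_sub sylR) nNX) sylR.
have [xb /morphimP[x nNx Xx ->{xb}] ->{Rb sylRb}] := Sylow_trans sylRN sylRb.
rewrite -quotientJ //.
have sylRx : r.-Sylow(X) (R :^ x)%G by rewrite pHallJ.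
exact: quotient_Sylow_norm_cent1 nsNX sylRx (sncX r _ sylRx).
Qed.

Lemma p'group_sub_normal r X R C H :
  r.-group R -> X \subset R * C -> X \subset 'N(C) ->
  r^'.-group H -> H \subset X -> H \subset C.
Proof.
move=> rR sXRC nCX r'H sHX; have nCH := subset_trans sHX nCX.
have coRH := pnat_coprime (quotient_pgroup C rR) (quotient_pgroup C r'H).
rewrite -quotient_sub1 // -(coprime_TIg coRH) subsetI subxx andbT /=.
by rewrite -(quotientMidr C R) quotientS // (subset_trans sHX sXRC).
Qed.

Lemma quotient_nil_Sylow_normal r X N R :
  N <| X -> r.-group N -> nilpotent (X / N) -> r.-Sylow(X) R -> R <| X.
Proof.
move=> nsNX rN nilXN sylR; have nNX := normal_norm nsNX.
have sylRN := quotient_pHall (subset_trans (pHall_sub sylR) nNX) sylR.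
have nsRNXN : R / N <| X / N.
  by rewrite (nilpotent_Hall_pcore nilXN sylRN) pcore_normal.
have sNR : N \subset R.
  exact: subset_trans (pcore_max rN nsNX) (pcore_sub_Hall sylR).
have nsNR : N <| R by rewrite /normal sNR (subset_trans (pHall_sub sylR) nNX).
by rewrite -(quotientGK nsNR) -(quotientGK nsNX) cosetpre_normal.
Qed.

End SylowNormCent.

Lemma Sylow_norm_cent_nil gT (X : {group gT}) :
  solvable X -> Sylow_norm_cent X -> nilpotent X.
Proof.
have [n] := ubnP #|X|; elim: n gT X => // n IHn gT X /ltnSE-leXn solX sncX.
have [-> | ntX] := eqsVneq X 1; first exact: nilpotent1.
(* N is a minimal normal r-subgroup; X / N is nilpotent by induction, so the
   Sylow r-subgroup R is normal, X = R 'C_X(R), and an r'-Hall subgroup H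
   centralises R and embeds in X / N. *)
have [N [sNX nsNX ntN abelN]] := solvable_norm_abelem solX (normal_refl X) ntX.
have [r _ /and3P[rN _ _]] := is_abelemP abelN; have nNX := normal_norm nsNX.
have nilXN : nilpotent (X / N).
  apply: IHn (quotient_sol N solX) (quotient_Sylow_norm_cent nsNX sncX).
  exact: leq_trans (ltn_quotient ntN sNX) leXn.
have [R sylR] := Sylow_exists r X; have rR := pHall_pgroup sylR.
have nsRX := quotient_nil_Sylow_normal nsNX rN nilXN sylR.
have [H hallH] := Hall_exists r^' solX; have [sHX r'H _] := and3P hallH.
have sXRC : X \subset R * 'C_X(R).
  by rewrite -{1}(setIidPl (normal_norm nsRX)) (sncX r).
have cRH : H \subset 'C(R).
  apply: subset_trans (subsetIr X _).
  apply: p'group_sub_normal rR sXRC _ r'H sHX.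
  by rewrite normsI ?normG ?norms_cent ?normal_norm.
have defX : R \x H = X.
  by rewrite dprodEsd //; apply/(sdprod_normal_p'HallP nsRX hallH).
have tiNH : N :&: H = 1 := coprime_TIg (pnat_coprime rN r'H).
rewrite (dprod_nil defX) (pgroup_nil rR).
rewrite (isog_nil (quotient_isog (subset_trans sHX nNX) tiNH)).
exact: nilpotentS (quotientS N sHX) nilXN.
Qed.

Lemma pgroup_pi_of_sub (gT : finGroupType) (p : nat) (P X : {group gT}) :
  p.-group P -> P :!=: 1 -> P \subset X -> p \in \pi(X).
Proof.
move=> pP ntP sPX; have [pr_p dvd_p_P _] := pgroup_pdiv pP ntP.
by rewrite mem_primes pr_p cardG_gt0 (dvdn_trans dvd_p_P (cardSg sPX)).
Qed.

Section SylowGraph.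

Variable gT : finGroupType.
Implicit Types (p q : nat) (X H P R : {group gT}) (y : gT).

Lemma mem_constt pi X y : y \in X -> y.`_pi \in X.
Proof.
by move=> Xy; apply: subsetP (cycle_constt pi y); rewrite cycle_subG.
Qed.

Lemma pi_quotient_norm_centP q X P : P \subset X ->
  reflect (exists2 y, q.-elt y & y \in 'N_X(P) :\: P * 'C_X(P))
          (q \in \pi('N_X(P) / (P <*> 'C_X(P)))).
Proof.
move=> sPX; set K := P <*> 'C_X(P).
have nCP : P \subset 'N('C_X(P)).
  by rewrite normsI ?norms_cent ?normG ?(subset_trans sPX (normG X)).
have defK : K = P * 'C_X(P) by rewrite /K norm_joinEl.
have nKN : 'N_X(P) \subset 'N(K).
  rewrite norms_gen // normsU ?subsetIr // normsI ?norms_cent ?subsetIr //.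
  exact: subset_trans (subsetIl X _) (normG X).
apply: (iffP idP) => [| [y qy /setDP[Ny PCy]]].
  rewrite mem_primes => /and3P[pr_q _ /(Cauchy pr_q)[_ /morphimP[x nKx Nx ->]]].
  move=> oxb.
  exists x.`_q; first exact: p_elt_constt.
  have Nxq := mem_constt q Nx; rewrite inE Nxq andbT -defK.
  have xq_x : coset K x.`_q = coset K x.
    by rewrite morph_constt ?constt_p_elt // /p_elt oxb pnat_id.
  apply: contraL (prime_gt1 pr_q) => /coset_id xq1.
  by rewrite -oxb /= -xq_x xq1 order1.
have ntyb : coset K y != 1.
  by apply: contra PCy => /eqP/(coset_idr (subsetP nKN y Ny)); rewrite -defK.
apply: (@pgroup_pi_of_sub _ q <[coset K y]>%G).
- exact: morph_p_elt (subsetP nKN y Ny) qy.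
- by rewrite cycle_eq1.
- by rewrite cycle_subG mem_quotient.
Qed.

Lemma sylow_edgeP X p q :
  reflect (exists2 P : {group gT}, p.-Sylow(X) P &
             exists2 y, q.-elt y & y \in 'N_X(P) :\: P * 'C_X(P))
          (sylow_edge X p q).
Proof.
apply: (iffP and3P) => [[_ _ /existsP[P /andP[]]] | [P sylP [y qy NPCy]]].
  rewrite inE => sylP /pi_quotient_norm_centP-/(_ (pHall_sub sylP)).
  by exists P.
have [sPX pP _] := and3P sylP; have /setDP[/setIP[Xy _] PCy] := NPCy.
split.
- apply: pgroup_pi_of_sub pP _ sPX; apply: contra PCy => /eqP P1.
  by rewrite P1 mul1g cent1T setIT.
- apply: (@pgroup_pi_of_sub _ q <[y]>%G) => //; last by rewrite cycle_subG.
  by apply: contra PCy; rewrite cycle_eq1 => /eqP->; rewrite -[1]mulg1 mem_mulg.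
apply/existsP; exists P; rewrite inE sylP.
by apply/pi_quotient_norm_centP => //; exists y.
Qed.

Lemma sylow_edge_nonnil X p q :
  sylow_edge X p q -> nonnil_subgroup (pred2 p q) X.
Proof.
case/sylow_edgeP=> P sylP [y qy /setDP[Ny PCy]]; have /setIP[Xy nPy] := Ny.
have [sPX pP _] := and3P sylP.
have Py : y \notin P by apply: contra PCy => Py; rewrite -[y]mulg1 mem_mulg.
have CPy : y \notin 'C(P).
  by apply: contra PCy => cPy; rewrite -[y]mul1g mem_mulg // inE Xy.
have p'y : p^'.-elt y.
  apply: (sub_p_elt _ qy) => r /eqP->{r}; apply: contra Py => /eqP qp.
  have sylPN : p.-Sylow('N_X(P)) P.
    by rewrite (pHall_subl _ (subsetIl X _) sylP) // subsetI sPX normG.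
  by rewrite (mem_normal_Hall sylPN (normalSG sPX) Ny) -qp.
apply/existsP; exists (P <*> <[y]>)%G; rewrite join_subG sPX cycle_subG Xy /=.
have defPy : P <*> <[y]> = P * <[y]> by rewrite norm_joinEr ?cycle_subG.
rewrite {1}defPy pgroupM (pi_pgroup pP) ?(pi_pgroup qy) ?inE ?eqxx ?orbT //=.
apply: contra CPy => nilPy; rewrite -cycle_subG.
by rewrite (sub_nilpotent_cent2 nilPy) ?joing_subl ?joing_subr
           ?(pnat_coprime pP p'y).
Qed.

Lemma pred2C p q : pred2 p q =i pred2 q p.
Proof. by move=> r; rewrite !inE orbC. Qed.

Lemma Sylow_norm_cent_p'elt p H R y :
  p.-Sylow(H) R -> y \in 'N_H(R) :\: R * 'C_H(R) ->
  y.`_p^' \in 'N_H(R) :\: R * 'C_H(R).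
Proof.
move=> sylR /setDP[Ny RCy]; have sRH := pHall_sub sylR.
have sylRN : p.-Sylow('N_H(R)) R.
  by rewrite (pHall_subl _ (subsetIl H _) sylR) // subsetI sRH normG.
have Ryp : y.`_p \in R.
  by rewrite (mem_normal_Hall sylRN (normalSG sRH)) ?p_elt_constt ?mem_constt.
rewrite inE mem_constt // andbT; apply: contra RCy => RCy'.
by have := mem_mulg Ryp RCy'; rewrite mulgA mulGid consttC.
Qed.

Lemma Hall_sylow_edge X H R p q y :
  (pred2 p q).-Hall(X) H -> p.-Sylow(H) R -> y \in 'N_H(R) :\: R * 'C_H(R) ->
  sylow_edge X p q.
Proof.
move=> hallH sylRH /(Sylow_norm_cent_p'elt sylRH)/setDP[Ny' RCy'].
have [sHX pqH _] := and3P hallH; have /setIP[Hy' _] := Ny'.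
apply/sylow_edgeP; exists R.
  by rewrite (subHall_Sylow hallH _ sylRH) ?inE ?eqxx.
exists y.`_p^'.
  apply: (sub_p_elt (pi1 := [predI pred2 p q & p^'])).
    by move=> r; rewrite !inE => /andP[/orP[/eqP-> | //]]; rewrite eqxx.
  rewrite /p_elt pnatI; apply/andP; split; last exact: p_elt_constt.
  exact: mem_p_elt pqH Hy'.
rewrite inE (subsetP (setSI _ sHX) _ Ny') andbT; apply: contra RCy' => RCy'X.
have : y.`_p^' \in R * 'C_X(R) :&: H by rewrite inE RCy'X.
by rewrite -group_modl ?(pHall_sub sylRH) // setIAC (setIidPr sHX).
Qed.

Lemma Hall_Sylow_norm_cent X H p q :
  (pred2 p q).-Hall(X) H -> ~~ usylow_edge X p q -> Sylow_norm_cent H.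
Proof.
move=> hallH noEdge r R sylR; apply/subsetP => y Ny.
apply: contraR noEdge => RCy.
have NRCy : y \in 'N_H(R) :\: R * 'C_H(R) by rewrite inE RCy.
have ntR : R :!=: 1.
  by apply: contra RCy => /eqP->; rewrite mul1g cent1T setIT; case/setIP: Ny.
have /pred2P[] := pnatPpi (pgroupS (pHall_sub sylR) (pHall_pgroup hallH))
                          (pgroup_pi_of_sub (pHall_pgroup sylR) ntR (subxx R)).
  move=> r_p; rewrite r_p in sylR.
  by rewrite /usylow_edge (Hall_sylow_edge hallH sylR NRCy).
move=> r_q; rewrite r_q (eq_pHall _ _ (pred2C p q)) in sylR hallH.
by rewrite /usylow_edge (Hall_sylow_edge hallH sylR NRCy) orbT.
Qed.

Lemma usylow_edge_nonnil X p q :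
  solvable X -> usylow_edge X p q = nonnil_subgroup (pred2 p q) X.
Proof.
move=> solX; have [H hallH] := Hall_exists (pred2 p q) solX.
have hallH' : (pred2 q p).-Hall(X) H by rewrite (eq_pHall _ _ (pred2C q p)).
apply/idP/idP => [/orP[/sylow_edge_nonnil // | /sylow_edge_nonnil] | ].
  by rewrite (nonnil_subgroup_Hall solX hallH')
             (nonnil_subgroup_Hall solX hallH).
rewrite (nonnil_subgroup_Hall solX hallH); apply: contraR => noEdge.
have solH := solvableS (pHall_sub hallH) solX.
exact: Sylow_norm_cent_nil solH (Hall_Sylow_norm_cent hallH noEdge).
Qed.

End SylowGraph.

Theorem proposition1 (gT : finGroupType) (G A B : {group gT}) :
  solvable G -> A <| G -> B <| G -> A * B = G ->
  (forall p : nat, sylow_vertex G p = sylow_vertex A p || sylow_vertex B p) /\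
  (forall p q : nat, usylow_edge G p q = usylow_edge A p q || usylow_edge B p q).
Proof.
move=> solG nsAG nsBG defG.
have solA := solvableS (normal_sub nsAG) solG.
have solB := solvableS (normal_sub nsBG) solG.
split=> [p | p q]; first by rewrite /sylow_vertex (pi_mulG defG).
by rewrite !usylow_edge_nonnil // (nonnil_subgroup_mul _ solG nsAG nsBG defG).
Qed.
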